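(* Let $T$ be a full binary tree of order $n$. Then $b(T)\le \lceil n^{1/2}\rceil$.
   Context: A full binary tree is a rooted tree in which every vertex has either $0$ or $2$ children. Burning process of a connected graph $G$: initially all vertices are unburned. In each round $r\ge 1$, one vertex $x_r$ that is unburned at the end of round $r-1$ is chosen as the source of round $r$; in round $r$ the source $x_r$ becomes burned, and so does every vertex that was unburned at the end of round $r-1$ and is adjacent to a vertex burned at the end of round $r-1$. Burned vertices stay burned. If all vertices are burned at the end of round $k$ (and not earlier), $(x_1,\dots,x_k)$ is called a burning sequence for $G$ of length $k$. The burning number $b(G)$ is the minimum length of a burning sequence for $G$. *)

From mathcomp Require Import all_boot.
Set Implicit Arguments. Unset Strict Implicit. Unset Printing Implicit Defensive.

Section Graphs.
Variables (T : finType) (e : rel T).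

Definition simple_graph : Prop := symmetric e /\ irreflexive e.

(* a tree: connected and without cycles (a cycle = closed walk on >= 3
   pairwise distinct vertices) *)
Definition is_tree : Prop :=
  (forall x y : T, connect e x y) /\
  (forall c : seq T, ucycle e c -> size c <= 2).

Definition nbhd (B : {set T}) : {set T} :=
  B :|: [set v | [exists u in B, e u v]].

Definition ball (x : T) (k : nat) : {set T} := iter k nbhd [set x].

(* graph distance (for connected graphs; any vertex is within #|T| steps) *)
Definition dist (x y : T) : nat := find (fun k => y \in ball x k) (iota 0 #|T|.+1).

Definition children (r v : T) : {set T} :=
  [set u | e v u && (dist r u == (dist r v).+1)].

Definition full_binary_tree : Prop :=
  is_tree /\ exists r : T, forall v : T, #|children r v| \in [:: 0; 2].

Definition burn_step (B : {set T}) (x : T) : {set T} := x |: nbhd B.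

Definition burned (xs : seq T) : {set T} := foldl burn_step set0 xs.

Definition burning_seq (xs : seq T) : bool :=
  [&& [forall i : 'I_(size xs), tnth (in_tuple xs) i \notin burned (take i xs)],
      burned xs == [set: T] &
      burned (take (size xs).-1 xs) != [set: T] ].

Definition has_burning_seq (k : nat) : bool :=
  [exists t : k.-tuple T, burning_seq t].

(* burning number: least k admitting a burning sequence of length k
   (for a connected nonempty graph such k exists and is <= #|T|) *)
Definition burning_number : nat := find has_burning_seq (iota 0 #|T|.+1).

End Graphs.

Definition ceil_sqrt (n : nat) : nat := find (fun m => n <= m ^ 2) (iota 0 n.+1).

From mathcomp Require Import all_boot zify.
Set Implicit Arguments. Unset Strict Implicit. Unset Printing Implicit Defensive.

(* With k = ceil(sqrt n), it suffices to cover the tree by k balls B(c_j, j),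
   j < k: lighting c_(k-1), ..., c_0 in this order (or any unburned vertex when
   c_j is already burning) burns everything after k rounds, since the fire lit
   in round k - j has reached distance j by then.

   The cover is built by induction on k for abstract binary trees with at most
   k^2 nodes. If the height is below k, the ball of radius k - 1 at the root
   suffices. Otherwise let u be the ancestor of a deepest leaf whose subtree has
   height exactly k - 1, and p its parent: B(u, k - 1) contains p and the whole
   subtree of u. Deleting p and that subtree (at least 2k nodes) and moving the
   sibling of u into the place of p leaves at most (k - 1)^2 nodes, which are
   covered by balls of radii 0, ..., k - 2. Putting p back lengthens only paths
   through p, by one, and such a path then ends within distance k - 1 of u.

   The graph is related to abstract trees by unfolding it from its root; the
   tree distance between two positions bounds the graph distance of the
   vertices they lead to. *)

Lemma find_leq (P : pred nat) (s : seq nat) i :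
  i < size s -> P (nth 0 s i) -> find P s <= i.
Proof. by move=> lt_i Pi; rewrite leqNgt; apply/negP => /(before_find 0); rewrite Pi. Qed.

Section Balls.
Variables (T : finType) (e : rel T).

Lemma in_nbhd (B : {set T}) x :
  (x \in nbhd e B) = (x \in B) || [exists u in B, e u x].
Proof. by rewrite !inE. Qed.

Lemma subset_nbhd (B : {set T}) : B \subset nbhd e B.
Proof. exact: subsetUl. Qed.

Lemma nbhdS (A B : {set T}) : A \subset B -> nbhd e A \subset nbhd e B.
Proof.
move/subsetP => sAB; apply/subsetP => x; rewrite !in_nbhd.
case/orP => [/sAB -> //| /exists_inP[u /sAB Bu eux]].
by apply/orP; right; apply/exists_inP; exists u.
Qed.

Lemma ballS x m : ball e x m.+1 = nbhd e (ball e x m).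
Proof. by []. Qed.

Lemma mem_ball0 x y : (y \in ball e x 0) = (y == x).
Proof. exact: in_set1. Qed.

Lemma ball_leq x m n : m <= n -> ball e x m \subset ball e x n.
Proof.
move=> le_mn; rewrite -(subnKC le_mn); elim: (n - m) => [|k IHk].
  by rewrite addn0.
by rewrite addnS ballS; apply: subset_trans IHk (subset_nbhd _).
Qed.

Lemma mem_ball_leq x m n y : m <= n -> y \in ball e x m -> y \in ball e x n.
Proof. by move/(ball_leq x)/subsetP; apply. Qed.

Lemma mem_ball_edge x m y z : y \in ball e x m -> e y z -> z \in ball e x m.+1.
Proof.
by move=> ym eyz; rewrite ballS in_nbhd; apply/orP; right; apply/exists_inP; exists y.
Qed.

Lemma mem_ball1 x y : e x y -> y \in ball e x 1.
Proof. by apply: mem_ball_edge; rewrite mem_ball0. Qed.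

Lemma mem_ball_trans x y z m n :
  y \in ball e x m -> z \in ball e y n -> z \in ball e x (m + n).
Proof.
move=> ym; elim: n z => [|n IHn] z; first by rewrite mem_ball0 addn0 => /eqP ->.
rewrite ballS in_nbhd addnS => /orP[/IHn zmn | /exists_inP[w /IHn wmn ewz]].
  exact: mem_ball_leq zmn.
exact: mem_ball_edge wmn ewz.
Qed.

Lemma mem_ball_path x p : path e x p -> last x p \in ball e x (size p).
Proof.
elim: p x => [|y p IHp] x /=; first by rewrite mem_ball0.
by case/andP => /mem_ball1 y1 /IHp; apply: mem_ball_trans y1.
Qed.

Hypothesis e_sym : symmetric e.

Lemma mem_ball_sym x y m : (y \in ball e x m) = (x \in ball e y m).
Proof.
suff sym u v : v \in ball e u m -> u \in ball e v m by apply/idP/idP; apply: sym.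
elim: m v => [|m IHm] v; first by rewrite !mem_ball0 eq_sym.
rewrite ballS in_nbhd => /orP[/IHm um | /exists_inP[w /IHm uw ewv]].
  exact: mem_ball_leq um.
by rewrite -add1n; apply: mem_ball_trans uw; rewrite mem_ball1 // e_sym.
Qed.

Hypothesis e_conn : forall x y, connect e x y.

Lemma mem_ball_card x y : y \in ball e x #|T|.
Proof.
have /connectP[p e_p ->] := e_conn x y.
case: (shortenP e_p) => p' e_p' uniq_p' _.
apply: mem_ball_leq (mem_ball_path e_p').
by have := max_card (mem (x :: p')); rewrite (card_uniqP uniq_p') /=; lia.
Qed.

Lemma mem_ball_dist x y m : (y \in ball e x m) = (dist e x y <= m).
Proof.
have has_ball : has (fun k => y \in ball e x k) (iota 0 #|T|.+1).
  by apply/hasP; exists #|T|; rewrite ?mem_ball_card // mem_iota add0n ltnSn.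
have lt_dist : dist e x y < #|T|.+1 by rewrite -[#|T|.+1](size_iota 0) -has_find.
have ball_dist : y \in ball e x (dist e x y).
  by have := nth_find 0 has_ball; rewrite nth_iota.
apply/idP/idP => [ym | le_m]; last exact: mem_ball_leq le_m ball_dist.
rewrite leqNgt; apply/negP => lt_m.
by have := before_find 0 lt_m; rewrite nth_iota ?ym //; lia.
Qed.

Lemma dist_leq_card x y : dist e x y <= #|T|.
Proof. by rewrite -mem_ball_dist mem_ball_card. Qed.

Lemma dist_eq0 x y : (dist e x y == 0) = (y == x).
Proof. by rewrite -mem_ball0 mem_ball_dist leqn0. Qed.

Lemma dist_edge x y z : e y z -> dist e x z <= (dist e x y).+1.
Proof.
by move=> eyz; rewrite -mem_ball_dist; apply: mem_ball_edge eyz; rewrite mem_ball_dist.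
Qed.

Lemma dist_parent x z d :
  dist e x z = d.+1 -> exists2 y, e y z & dist e x y = d.
Proof.
move=> dz; have : z \in ball e x d.+1 by rewrite mem_ball_dist dz.
rewrite ballS in_nbhd => /orP[| /exists_inP[y yd eyz]].
  by rewrite mem_ball_dist dz ltnn.
exists y => //; move: yd; rewrite mem_ball_dist => yd.
by have := dist_edge x eyz; lia.
Qed.

End Balls.

Inductive btree := Leaf | Node of btree & btree.

Fixpoint bsize t := if t is Node l r then bsize l + bsize r + 1 else 1.

Fixpoint height t := if t is Node l r then (maxn (height l) (height r)).+1 else 0.

(* Nodes of a [btree] are addressed by their position, the sequence of turns
   ([false] = left, [true] = right) from the root. *)
Fixpoint is_pos t (q : seq bool) := match q, t with
  | [::], _ => true
  | _ :: _, Leaf => false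
  | b :: q', Node l r => is_pos (if b then r else l) q'
  end.

Fixpoint subtree t (q : seq bool) := match q, t with
  | [::], _ => t
  | _ :: _, Leaf => Leaf
  | b :: q', Node l r => subtree (if b then r else l) q'
  end.

Fixpoint graft t (q : seq bool) x := match q, t with
  | [::], _ => x
  | _ :: _, Leaf => Leaf
  | b :: q', Node l r => if b then Node l (graft r q' x) else Node (graft l q' x) r
  end.

(* Distance between two nodes of the infinite complete binary tree. *)
Fixpoint pdist (a q : seq bool) := match a, q with
  | x :: a', y :: q' => if x == y then pdist a' q' else size a' + size q' + 2
  | [::], _ => size q
  | _, [::] => size a
  end.

Lemma is_pos0 t : is_pos t [::].
Proof. by case: t. Qed.

Lemma subtree0 t : subtree t [::] = t.
Proof. by case: t. Qed.

Lemma height_bsize t : 2 * height t + 1 <= bsize t.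
Proof. by elim: t => //= l IHl r IHr; rewrite /maxn; case: ifP; lia. Qed.

Lemma size_pos_height t q : is_pos t q -> size q <= height t.
Proof. by elim: q t => [|b q IHq] [|l r] //= /IHq; case: b => /=; lia. Qed.

Lemma exists_deepest_pos t : exists2 v, is_pos t v & size v = height t.
Proof.
elim: t => [|l [vl pos_l size_l] r [vr pos_r size_r]]; first by exists [::].
rewrite /= /maxn; case: ifP => _; first by exists (true :: vr); rewrite /= ?size_r.
by exists (false :: vl); rewrite /= ?size_l.
Qed.

Lemma is_pos_cat t p w : is_pos t (p ++ w) = is_pos t p && is_pos (subtree t p) w.
Proof. by elim: p t => [|b p IHp] [|l r] //=; rewrite ?is_pos0 ?subtree0. Qed.

Lemma subtree_cat t p w : subtree t (p ++ w) = subtree (subtree t p) w.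
Proof. by elim: p t => [|b p IHp] [|l r] //=; case: (w). Qed.

Lemma is_pos_rcons t p b :
  is_pos t (rcons p b) = is_pos t p && (if subtree t p is Node _ _ then true else false).
Proof. by rewrite -cats1 is_pos_cat; case: (subtree t p) => //= l r; rewrite is_pos0. Qed.

Lemma bsize_subtree_rcons t p b : is_pos t (rcons p b) ->
  bsize (subtree t p) =
    bsize (subtree t (rcons p b)) + bsize (subtree t (rcons p (~~ b))) + 1.
Proof.
rewrite is_pos_rcons -!cats1 !subtree_cat => /andP[_].
by case: (subtree t p) => //= l r _; rewrite !subtree0; case: b => /=; lia.
Qed.

Lemma is_pos_graft_cat t p x w : is_pos t p -> is_pos (graft t p x) (p ++ w) = is_pos x w.
Proof. by elim: p t => [|b p IHp] [|l r] //=; case: b => /=; apply: IHp. Qed.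

Lemma is_pos_graft_out t p x q : ~~ prefix p q -> is_pos (graft t p x) q = is_pos t q.
Proof.
elim: p t q => [|b p IHp] [|l r] [|c q] //=; first by case: b.
by rewrite eqE /=; case: b; case: c => //= /IHp.
Qed.

Lemma bsize_graft t p x : is_pos t p ->
  bsize (graft t p x) + bsize (subtree t p) = bsize t + bsize x.
Proof. by elim: p t => [|b p IHp] [|l r] //=; try lia; case: b => /= /IHp; lia. Qed.

Lemma pdistC a q : pdist a q = pdist q a.
Proof. by elim: a q => [|x a IHa] [|y q] //=; rewrite IHa eq_sym; case: eqP; lia. Qed.

Lemma pdist_catl p a q : pdist (p ++ a) (p ++ q) = pdist a q.
Proof. by elim: p => //= x p ->; rewrite eqxx. Qed.

Lemma pdist_eq0 a q : (pdist a q == 0) = (a == q).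
Proof.
elim: a q => [|x a IHa] [|y q] //=; rewrite eqseq_cons.
by case: (x == y); rewrite ?IHa // addn2.
Qed.

Lemma pdist_cat_out p w q : ~~ prefix p q -> pdist (p ++ w) q = size w + pdist p q.
Proof.
elim: p q => [|x p IHp] [|y q] //=; first by rewrite size_cat; lia.
by case: (x == y) => /= [/IHp|_]; rewrite ?size_cat //; lia.
Qed.

Lemma exists_deep_branch t k : k < height t -> exists p b,
  [/\ is_pos t (rcons p b), size p = height t - k.+1 & k <= height (subtree t (rcons p b))].
Proof.
move=> lt_k_t; have [v pos_v size_v] := exists_deepest_pos t.
move def_m : (height t - k.+1) => m; set pb := rcons (take m v) (nth false v m).
have lt_v : m < size v by rewrite size_v; lia.
have /andP[pos_pb /size_pos_height] : is_pos t pb && is_pos (subtree t pb) (drop m.+1 v).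
  by rewrite /pb -is_pos_cat -take_nth // cat_take_drop.
rewrite size_drop size_v => high_pb.
by exists (take m v), (nth false v m); rewrite size_take lt_v -/pb; split => //; lia.
Qed.

(* Positions of [contract t p b] (below) seen in [t]: ~~ b is reinserted after p. *)
Definition lift_pos p (b : bool) q :=
  if prefix p q then p ++ ~~ b :: drop (size p) q else q.

Lemma pdist_lift_pos p b a q :
  pdist (lift_pos p b a) (lift_pos p b q) <= pdist a q \/
  pdist (rcons p b) (lift_pos p b q) <= (pdist a q).+1.
Proof.
rewrite /lift_pos.
case: (boolP (prefix p a)) => [/prefixP[wa ->] | pa];
  case: (boolP (prefix p q)) => [/prefixP[wq ->] | pq].
- by left; rewrite !drop_size_cat // !pdist_catl /= eqxx.
- by right; rewrite -cats1 !pdist_cat_out //=; lia.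
- right; rewrite drop_size_cat // -cats1 pdist_catl [pdist a _]pdistC pdist_cat_out //.
  have : pdist p a != 0 by rewrite pdist_eq0; apply: contraNneq pa => ->; rewrite prefix_refl.
  by case: b => /=; lia.
- by left.
Qed.

Section Contraction.
Variables (t : btree) (p : seq bool) (b : bool).
Hypothesis pos_pb : is_pos t (rcons p b).

Definition contract := graft t p (subtree t (rcons p (~~ b))).

Let pos_p : is_pos t p.
Proof. by move: pos_pb; rewrite is_pos_rcons => /andP[]. Qed.

Let pos_pnb : is_pos t (rcons p (~~ b)).
Proof. by move: pos_pb; rewrite !is_pos_rcons. Qed.

Lemma bsize_contract : bsize contract + bsize (subtree t (rcons p b)) + 1 = bsize t.
Proof.
have := bsize_graft (subtree t (rcons p (~~ b))) pos_p.
by have := bsize_subtree_rcons pos_pb; rewrite /contract; lia.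
Qed.

Lemma is_pos_lift_contract q : is_pos contract q -> is_pos t (lift_pos p b q).
Proof.
rewrite /contract /lift_pos; case: (boolP (prefix p q)) => [/prefixP[w ->] | pq].
  by rewrite is_pos_graft_cat // drop_size_cat // -cat_rcons is_pos_cat pos_pnb.
by rewrite is_pos_graft_out.
Qed.

Lemma lift_contract_or_near q : is_pos t q ->
  (exists2 q', is_pos contract q' & lift_pos p b q' = q) \/
  pdist (rcons p b) q <= maxn 1 (height t - (size p).+1).
Proof.
move=> pos_q; case: (boolP (prefix p q)) => [/prefixP[w eq_q] | pq]; last first.
  by left; exists q; rewrite /contract ?is_pos_graft_out // /lift_pos (negbTE pq).
subst q; case: w pos_q => [|c w] pos_q.
  by right; rewrite -cats1 pdist_catl leq_maxl.
have [-> | neq_cb] := eqVneq c b.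
  right; rewrite -cats1 pdist_catl /= eqxx.
  by have := size_pos_height pos_q; rewrite size_cat /=; lia.
have {neq_cb} eq_c : c = ~~ b by move: neq_cb; case: (b); case: (c).
subst c; left; exists (p ++ w); last by rewrite /lift_pos prefix_prefix drop_size_cat.
by move: pos_q; rewrite /contract is_pos_graft_cat // -cat_rcons is_pos_cat => /andP[].
Qed.

End Contraction.

Lemma btree_cover k t : bsize t <= k ^ 2 -> exists c : nat -> seq bool,
  (forall j, is_pos t (c j)) /\
  forall q, is_pos t q -> exists2 j, j < k & pdist (c j) q <= j.
Proof.
elim: k t => [|k IHk] t le_t; first by have := height_bsize t; rewrite exp0n in le_t; lia.
have [shallow | deep] := leqP (height t) k.
  exists (fun=> [::]); split=> [_|q /size_pos_height q_t]; first exact: is_pos0.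
  by exists k => //; apply: leq_trans q_t shallow.
have [p [b [pos_pb size_p high_pb]]] := exists_deep_branch deep.
have bsize_t := bsize_contract pos_pb.
have bsize_pb := height_bsize (subtree t (rcons p b)).
rewrite -mulnn in le_t; have k_gt0 : 0 < k by nia.
have [|c [pos_c cover_c]] := IHk (contract t p b); first by rewrite -mulnn; nia.
exists (fun j => if j == k then rcons p b else lift_pos p b (c j)); split.
  by move=> j; case: ifP => _; [exact: pos_pb | exact: is_pos_lift_contract].
move=> q /(lift_contract_or_near pos_pb)[[q' /cover_c[j lt_jk near_j] <-] | near_pb].
  have [near_lift | near_pb] := pdist_lift_pos p b (c j) q'.
    by exists j; [exact: leqW | rewrite ltn_eqF //; exact: leq_trans near_lift near_j].
  by exists k; rewrite ?eqxx //; exact: leq_trans near_pb (leq_ltn_trans near_j lt_jk).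
by exists k; rewrite ?eqxx //; apply: leq_trans near_pb _; rewrite size_p; lia.
Qed.

Fixpoint positions t : seq (seq bool) :=
  if t is Node l r then
    [::] :: map (cons false) (positions l) ++ map (cons true) (positions r)
  else [:: [::]].

Lemma size_positions t : size (positions t) = bsize t.
Proof. by elim: t => //= l IHl r IHr; rewrite size_cat !size_map IHl IHr; lia. Qed.

Lemma is_pos_positions t q : q \in positions t -> is_pos t q.
Proof.
elim: t q => [|l IHl r IHr] q /=; first by rewrite inE => /eqP ->.
by rewrite in_cons mem_cat => /or3P[/eqP -> | /mapP[q' /IHl ? ->] | /mapP[q' /IHr ? ->]].
Qed.

Lemma uniq_positions t : uniq (positions t).
Proof.
elim: t => //= l IHl r IHr.
rewrite mem_cat negb_or cat_uniq !map_inj_uniq ?IHl ?IHr //=; try by move=> ? ? [].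
rewrite andbT; apply/andP; split.
- by apply/andP; split; apply/mapP => -[].
- by apply/hasP => -[_ /mapP[? _ ->] /mapP[]].
Qed.

Section RootedTree.
Variables (T : finType) (e : rel T) (root : T).
Hypothesis e_sym : symmetric e.
Hypothesis e_conn : forall x y, connect e x y.
Hypothesis e_acyclic : forall c : seq T, ucycle e c -> size c <= 2.
Hypothesis e_full : forall v, #|children e root v| \in [:: 0; 2].

Local Notation depth x := (dist e root x).

Lemma depth_eq0 x : depth x = 0 -> x = root.
Proof. by move/eqP; rewrite (dist_eq0 e_conn) => /eqP. Qed.

(* Going up one level at both ends either closes a cycle through a common
   parent or yields a detour of the same kind one level higher. *)
Lemma no_deep_detour h a b s : depth a = h -> depth b = h -> a != b ->
  path e a (rcons s b) -> uniq (a :: rcons s b) -> all (fun z => h < depth z) s ->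
  False.
Proof.
elim: h a b s => [|h IHh] a b s da db neq_ab e_s uniq_s deep_s.
  by move: neq_ab; rewrite (depth_eq0 da) (depth_eq0 db) eqxx.
have [a' e_a'a da'] := dist_parent e_conn da.
have [b' e_b'b db'] := dist_parent e_conn db.
have deep : forall z, z \in a :: rcons s b -> h < depth z.
  move=> z; rewrite in_cons mem_rcons in_cons => /or3P[/eqP-> | /eqP-> | s_z].
  - by rewrite da.
  - by rewrite db.
  - by move/allP: deep_s => /(_ z s_z); lia.
have a'_out : a' \notin a :: rcons s b by apply/negP => /deep; rewrite da' ltnn.
have b'_out : b' \notin a :: rcons s b by apply/negP => /deep; rewrite db' ltnn.
have [eq_a'b' | neq_a'b'] := eqVneq a' b'.
  have cycle_a' : ucycle e (a' :: a :: rcons s b).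
    apply/andP; split; last by rewrite cons_uniq a'_out uniq_s.
    by rewrite /cycle rcons_cons /= e_a'a /= rcons_path e_s last_rcons /= eq_a'b' e_sym.
  by have := e_acyclic cycle_a'; rewrite /= size_rcons.
apply: (IHh a' b' (a :: rcons s b)) => //.
- by rewrite rcons_cons /= e_a'a /= rcons_path e_s last_rcons e_sym.
- by rewrite cons_uniq mem_rcons in_cons negb_or neq_a'b' a'_out rcons_uniq b'_out.
- by apply/allP => z /deep; lia.
Qed.

Lemma parent_unique y1 y2 x : e y1 x -> e y2 x ->
  depth x = (depth y1).+1 -> depth x = (depth y2).+1 -> y1 = y2.
Proof.
move=> e1 e2 d1 d2; apply/eqP/negP => /negP neq12.
apply: (@no_deep_detour (depth y1) y1 y2 [:: x]) => //=; last by rewrite d1 ltnSn.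
- lia.
- by rewrite e1 e_sym e2.
- have neq1 : y1 != x by apply/eqP => eq_x; move: d1; rewrite eq_x; lia.
  have neq2 : x != y2 by apply/eqP => eq_x; move: d2; rewrite eq_x; lia.
  by rewrite !inE !negb_or neq12 neq1 neq2.
Qed.

Local Notation kids v := (children e root v).

(* [child v b] is [v] itself when [v] is a leaf. *)
Definition child v (b : bool) := nth v (enum (kids v)) b.

Lemma card_children v : #|kids v| != 0 -> #|kids v| = 2.
Proof. by have := e_full v; rewrite !inE => /orP[/eqP-> | /eqP->]. Qed.

Lemma mem_child v b : #|kids v| = 2 -> child v b \in kids v.
Proof. by move=> card_v; rewrite -mem_enum mem_nth // -cardE card_v; case: b. Qed.

Lemma child_edge v b : #|kids v| = 2 -> e v (child v b).
Proof. by move/(mem_child b); rewrite inE => /andP[]. Qed.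

Lemma depth_child v b : #|kids v| = 2 -> depth (child v b) = (depth v).+1.
Proof. by move/(mem_child b); rewrite inE => /andP[_ /eqP]. Qed.

Lemma child_inj v b c : #|kids v| = 2 -> child v b = child v c -> b = c.
Proof.
move=> card_v /eqP; rewrite nth_uniq ?enum_uniq -?cardE ?card_v //; last by case: c.
  by move/eqP; case: b; case: c.
by case: b.
Qed.

Lemma children_child v u : #|kids v| = 2 -> u \in kids v -> exists b, u = child v b.
Proof.
move=> card_v; rewrite -mem_enum => /(nthP v)[i]; rewrite -cardE card_v.
by case: i => [|[|i]] // _ <-; [exists false | exists true].
Qed.

Fixpoint descendable v (q : seq bool) :=
  if q is b :: q' then (#|kids v| == 2) && descendable (child v b) q' else true.

Fixpoint descend v (q : seq bool) := if q is b :: q' then descend (child v b) q' else v.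

Lemma descend_rcons v q b : descend v (rcons q b) = child (descend v q) b.
Proof. by elim: q v => //= c q IHq v. Qed.

Lemma descendable_rcons v q b :
  descendable v (rcons q b) = descendable v q && (#|kids (descend v q)| == 2).
Proof. by elim: q v => [|c q IHq] v /=; rewrite ?andbT // IHq andbA. Qed.

Lemma depth_descend v q : descendable v q -> depth (descend v q) = depth v + size q.
Proof.
elim: q v => [|b q IHq] v /=; first by rewrite addn0.
by case/andP => /eqP card_v /IHq ->; rewrite depth_child //; lia.
Qed.

Lemma descend_ball v q : descendable v q -> descend v q \in ball e v (size q).
Proof.
elim: q v => [|b q IHq] v; first by rewrite mem_ball0.
case/andP => /eqP card_v /IHq desc_q; rewrite -[size _]add1n.
by apply: mem_ball_trans desc_q; rewrite mem_ball1 ?child_edge.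
Qed.

Lemma descend_pdist v a q : descendable v a -> descendable v q ->
  descend v q \in ball e (descend v a) (pdist a q).
Proof.
elim: a q v => [|x a IHa] [|y q] v.
- by rewrite mem_ball0.
- by move=> _; apply: descend_ball.
- by move=> desc_a _; rewrite -(mem_ball_sym e_sym); apply: descend_ball.
move=> /andP[/eqP card_v desc_a] /andP[_ desc_q]; rewrite [pdist _ _]/=.
case: eqP => [eq_xy | _]; first by subst y; exact: IHa.
have up : child v x \in ball e (descend (child v x) a) (size a).
  by rewrite -(mem_ball_sym e_sym); apply: descend_ball.
have down : descend v (y :: q) \in ball e v (size q).+1.
  by apply: descend_ball; rewrite /= card_v eqxx.
have over : v \in ball e (child v x) 1 by rewrite mem_ball1 // e_sym child_edge.
by have := mem_ball_trans (mem_ball_trans up over) down; apply: mem_ball_leq; lia.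
Qed.

Lemma descend_inj_size n a q : size a = n -> size q = n ->
  descendable root a -> descendable root q -> descend root a = descend root q -> a = q.
Proof.
elim: n a q => [|n IHn] a q; first by case: a; case: q.
case/lastP: a => // a x; case/lastP: q => // q y.
rewrite !size_rcons !descendable_rcons !descend_rcons.
move=> [size_a] [size_q] /andP[desc_a /eqP card_a] /andP[desc_q /eqP card_q] eq_xy.
have eq_aq : descend root a = descend root q.
  apply: (@parent_unique _ _ (child (descend root a) x)).
  - exact: child_edge.
  - by rewrite eq_xy; exact: child_edge.
  - exact: depth_child.
  - by rewrite eq_xy; exact: depth_child.
have {}eq_aq := IHn _ _ size_a size_q desc_a desc_q eq_aq; subst q.
by rewrite (child_inj card_a eq_xy).
Qed.

Lemma descend_inj a q : descendable root a -> descendable root q ->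
  descend root a = descend root q -> a = q.
Proof.
move=> desc_a desc_q eq_aq; apply: (@descend_inj_size (size a)) => //.
by have := depth_descend desc_a; have := depth_descend desc_q; rewrite eq_aq; lia.
Qed.

Lemma descend_surj x : exists2 q, descendable root q & descend root q = x.
Proof.
move def_d : (depth x) => d; elim: d x def_d => [|d IHd] x dx.
  by exists [::]; rewrite // (depth_eq0 dx).
have [y e_yx dy] := dist_parent e_conn dx.
have [q desc_q def_y] := IHd _ dy; subst y.
have kid_x : x \in kids (descend root q) by rewrite inE e_yx dx dy eqxx.
have card_y : #|kids (descend root q)| = 2.
  by apply: card_children; rewrite cards_eq0; apply: contraTneq kid_x => ->; rewrite inE.
have [b ->] := children_child card_y kid_x.
by exists (rcons q b); rewrite ?descendable_rcons ?desc_q ?card_y ?descend_rcons.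
Qed.

Fixpoint unfold_tree n v :=
  if n is n'.+1 then
    if #|kids v| == 2 then
      Node (unfold_tree n' (child v false)) (unfold_tree n' (child v true))
    else Leaf
  else Leaf.

Lemma is_pos_unfold_tree n v q :
  #|T| < depth v + n -> is_pos (unfold_tree n v) q = descendable v q.
Proof.
elim: n v q => [|n IHn] v q /=; first by rewrite addn0 ltnNge (dist_leq_card e_conn).
move=> deep_n; case: ifP => [/eqP card_v | card_v]; case: q => [|b q] //=.
  rewrite card_v eqxx /= -IHn; first by case: b.
  by rewrite depth_child // addSnnS.
by rewrite card_v.
Qed.

Lemma is_pos_unfold_root q : is_pos (unfold_tree #|T|.+1 root) q = descendable root q.
Proof.
apply: is_pos_unfold_tree; rewrite (_ : depth root = 0) //.
by apply/eqP; rewrite (dist_eq0 e_conn).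
Qed.

Lemma bsize_unfold_root : bsize (unfold_tree #|T|.+1 root) <= #|T|.
Proof.
set t := unfold_tree _ _; rewrite -size_positions -(size_map (descend root)).
have desc_t q : q \in positions t -> descendable root q.
  by move/is_pos_positions; rewrite is_pos_unfold_root.
have uniq_t : uniq (map (descend root) (positions t)).
  rewrite map_inj_in_uniq ?uniq_positions // => a q /desc_t desc_a /desc_t desc_q.
  exact: descend_inj.
by rewrite -(card_uniqP uniq_t) max_card.
Qed.

Lemma tree_ball_cover k : #|T| <= k ^ 2 ->
  exists c : nat -> T, forall x, exists2 j, j < k & x \in ball e (c j) j.
Proof.
move=> le_T; have [c [pos_c cover_c]] := btree_cover (leq_trans bsize_unfold_root le_T).
exists (fun j => descend root (c j)) => x.
have [q desc_q <-] := descend_surj x.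
have pos_q : is_pos (unfold_tree #|T|.+1 root) q by rewrite is_pos_unfold_root.
have [j lt_jk near_j] := cover_c q pos_q.
exists j => //; apply: mem_ball_leq near_j _.
by apply: descend_pdist; rewrite // -is_pos_unfold_root.
Qed.

End RootedTree.

Section Burning.
Variables (T : finType) (e : rel T) (x0 : T).

Definition fresh_sources (xs : seq T) :=
  forall i, i < size xs -> nth x0 xs i \notin burned e (take i xs).

Lemma burned_rcons xs y : burned e (rcons xs y) = y |: nbhd e (burned e xs).
Proof. by rewrite /burned foldl_rcons. Qed.

Lemma fresh_sources_rcons xs y :
  fresh_sources xs -> y \notin burned e xs -> fresh_sources (rcons xs y).
Proof.
move=> fresh_xs y_out i; rewrite size_rcons ltnS leq_eqVlt => /orP[/eqP -> | lt_i].
  by rewrite nth_rcons ltnn eqxx -cats1 take_size_cat.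
by rewrite nth_rcons lt_i -cats1 takel_cat ?(ltnW lt_i) //; apply: fresh_xs.
Qed.

(* Greedy schedule: in round i + 1 light the vertex [d i] if it is still
   unburned, and any unburned vertex otherwise. *)
Lemma burn_rounds (d : nat -> T) j : exists xs, [/\ fresh_sources xs, size xs <= j &
  burned e xs = setT \/
  size xs = j /\ forall i, i < j -> ball e (d i) (j - 1 - i) \subset burned e xs].
Proof.
elim: j => [|j [xs [fresh_xs size_xs [all_xs | [size_j balls_xs]]]]].
- by exists [::]; split => //; right.
- by exists xs; split => //; [exact: leqW | left].
have [z z_out | all_in] := pickP (fun z => z \notin burned e xs); last first.
  exists xs; split => //; first exact: leqW.
  by left; apply/setP => z; rewrite inE; move/negbFE: (all_in z).
set y := if d j \in burned e xs then z else d j.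
have y_out : y \notin burned e xs by rewrite /y; case: ifP => // ->.
have grow : nbhd e (burned e xs) \subset burned e (rcons xs y).
  by rewrite burned_rcons subsetUr.
exists (rcons xs y); split; [exact: fresh_sources_rcons | by rewrite size_rcons size_j |].
right; split=> [|i]; first by rewrite size_rcons size_j.
rewrite ltnS leq_eqVlt => /orP[/eqP -> | lt_ij].
  have -> : j.+1 - 1 - j = 0 by lia.
  apply/subsetP => _ /set1P ->.
  rewrite burned_rcons in_setU1 /y; case: ifP => [burnt|]; last by rewrite eqxx.
  by rewrite (subsetP (subset_nbhd e _)) ?orbT.
have -> : j.+1 - 1 - i = (j - 1 - i).+1 by lia.
by rewrite ballS; apply: subset_trans (nbhdS e (balls_xs _ lt_ij)) grow.
Qed.

Lemma burning_seq_fresh xs : fresh_sources xs -> burned e xs = setT ->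
  xs != [::] -> burning_seq e xs.
Proof.
move=> fresh_xs all_xs xs_n0; apply/and3P; split; last first.
- have := fresh_xs (size xs).-1; rewrite prednK ?lt0n ?size_eq0 // leqnn => /(_ isT).
  by apply: contra => /eqP ->; rewrite inE.
- by rewrite all_xs.
by apply/forallP => i; rewrite (tnth_nth x0) /=; apply: fresh_xs.
Qed.

Lemma burning_number_leq xs : burning_seq e xs -> size xs <= #|T| ->
  burning_number e <= size xs.
Proof.
move=> burn_xs le_xs; apply: find_leq; rewrite ?size_iota ?nth_iota //.
by apply/existsP; exists (in_tuple xs).
Qed.

Lemma burning_number_ball_cover k (c : nat -> T) : k <= #|T| ->
  (forall x, exists2 j, j < k & x \in ball e (c j) j) -> burning_number e <= k.
Proof.
move=> le_k cover.
have [xs [fresh_xs size_xs burn_xs]] := burn_rounds (fun i => c (k - 1 - i)) k.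
have all_xs : burned e xs = setT.
  case: burn_xs => // -[_ balls_xs]; apply/setP => x; rewrite inE.
  have [j lt_jk x_j] := cover x.
  have lt_i : k - 1 - j < k by lia.
  have := balls_xs _ lt_i; have -> : k - 1 - (k - 1 - j) = j by lia.
  by move/subsetP; apply.
have xs_n0 : xs != [::].
  by apply: contra_eqN all_xs => /eqP ->; apply/eqP/setP => /(_ x0); rewrite !inE.
have burn_seq := burning_seq_fresh fresh_xs all_xs xs_n0.
exact: leq_trans (burning_number_leq burn_seq (leq_trans size_xs le_k)) size_xs.
Qed.

End Burning.

Lemma ceil_sqrtP n : n <= ceil_sqrt n ^ 2.
Proof.
have has_sqrt : has (fun m => n <= m ^ 2) (iota 0 n.+1).
  by apply/hasP; exists n; [rewrite mem_iota; lia | rewrite /= -mulnn; nia].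
have lt_sqrt : ceil_sqrt n < n.+1 by rewrite -[n.+1](size_iota 0) -has_find.
by have := nth_find 0 has_sqrt; rewrite nth_iota.
Qed.

Lemma ceil_sqrt_leq n : ceil_sqrt n <= n.
Proof. by apply: find_leq; rewrite ?size_iota ?nth_iota //= -mulnn; nia. Qed.

Theorem mainTheorem9 (T : finType) (e : rel T) :
  simple_graph e -> full_binary_tree e ->
  burning_number e <= ceil_sqrt #|T|.
Proof.
move=> [e_sym _] [[e_conn e_acyclic] [root e_full]].
have [c cover] := tree_ball_cover e_sym e_conn e_acyclic e_full (ceil_sqrtP #|T|).
exact: (burning_number_ball_cover root (ceil_sqrt_leq _) cover).
Qed.
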